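(* Let $D \ge 1$ and let $L \colon \mathbb{Z}^D \times \mathbb{R}_+ \to \mathbb{R}$ be a discrete scale-space representation of a discrete signal $f \colon \mathbb{Z}^D \to \mathbb{R}$. Then $L$ satisfies the differential equation $$\partial_s L = \mathcal{A} L, \qquad (\mathcal{A} L)(x;s) = \sum_{\xi \in \mathbb{Z}^D} a_\xi \, L(x+\xi;s),$$ with initial condition $L(\cdot;0) = f(\cdot)$, for some infinitesimal scale-space generator $\mathcal{A}$ whose coefficients $a_\xi \in \mathbb{R}$ satisfy: (i) the locality condition: $a_\xi = 0$ if $|\xi|_\infty > 1$; (ii) the positivity constraint: $a_\xi \ge 0$ if $\xi \ne 0$; (iii) the zero sum condition: $\sum_{\xi \in \mathbb{Z}^D} a_\xi = 0$.
   Context: A one-parameter family of kernels $T \colon \mathbb{Z}^D \times \mathbb{R}_+ \to \mathbb{R}$ is a discrete pre-scale-space family of kernels if $T(\cdot;0) = \delta(\cdot)$ (discrete delta), $T(\cdot;s_1) * T(\cdot;s_2) = T(\cdot;s_1+s_2)$ for all $s_1, s_2 \ge 0$, and $\|T(\cdot;s) - \delta(\cdot)\|_1 \to 0$ as $s \downarrow 0$. The discrete pre-scale-space representation of $f$ generated by $T$ is $L(x;s) = \sum_{\xi \in \mathbb{Z}^D} T(\xi;s) f(x-\xi)$. Such an $L$ possesses pre-scale-space properties (does not enhance local extrema) if for every $s_0 \in \mathbb{R}_+$: whenever $x_0 \in \mathbb{Z}^D$ is a local maximum of $x \mapsto L(x;s_0)$ then $\partial_s L(x_0;s_0) \le 0$,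 and whenever $x_0$ is a local minimum then $\partial_s L(x_0;s_0) \ge 0$. Local extrema are understood in the weak (non-strict) sense with respect to the neighbourhood $\{x : \|x - x_0\|_\infty = 1\}$, i.e. $x_0$ is a local maximum if $L(x_0;s_0) \ge L(x;s_0)$ for all $x$ with $\|x-x_0\|_\infty = 1$ (analogously for minima). A discrete pre-scale-space family $T$ is a discrete scale-space family of kernels if for every discrete signal $f \in l_1$ the pre-scale-space representation of $f$ generated by $T$ possesses pre-scale-space properties. A discrete scale-space representation of $f$ is a discrete pre-scale-space representation of $f$ generated by a discrete scale-space family of kernels. *)

From HB Require Import structures.
From mathcomp Require Import all_boot all_order all_algebra.
From mathcomp Require Import all_classical all_reals all_analysis.
Set Implicit Arguments. Unset Strict Implicit. Unset Printing Implicit Defensive.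
Import Order.TTheory GRing.Theory Num.Theory.
Import numFieldNormedType.Exports.
Local Open Scope classical_set_scope.
Local Open Scope ring_scope.

Notation ZD D := 'rV[int]_D.

Definition norminf (D : nat) (x : ZD D) : nat := (\max_(i < D) absz (x ord0 i))%N.

Definition box_sum (R : realType) (D : nat) (n : nat) (g : ZD D -> R) : R :=
  \sum_(j : 'rV['I_(2 * n + 1)]_D) g (\row_i ((j ord0 i : nat)%:Z - n%:Z)).

Definition l1_summable (R : realType) (D : nat) (g : ZD D -> R) : Prop :=
  exists M : R, forall n : nat, box_sum n (fun x => `|g x|) <= M.

(* sum over Z^D (meaningful for l1_summable g: limit of box sums) *)
Definition lsum (R : realType) (D : nat) (g : ZD D -> R) : R :=
  lim ((fun n : nat => box_sum n g) @ \oo).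

Definition ddelta (R : realType) (D : nat) (x : ZD D) : R := (x == 0)%:R.

Definition pre_scale_space_family (R : realType) (D : nat)
    (T : ZD D -> R -> R) : Prop :=
  [/\ (forall s, 0 <= s -> l1_summable (fun x => T x s)),
      (forall x, T x 0 = ddelta R x),
      (forall s1 s2 x, 0 <= s1 -> 0 <= s2 ->
          lsum (fun xi => T xi s1 * T (x - xi) s2) = T x (s1 + s2)) &
      (fun s => lsum (fun x => `|T x s - ddelta R x|)) @ 0^'+ --> (0 : R)].

Definition pre_ss_rep (R : realType) (D : nat) (T : ZD D -> R -> R)
    (f : ZD D -> R) : ZD D -> R -> R :=
  fun x s => lsum (fun xi => T xi s * f (x - xi)).

(* d is the derivative of s |-> L(x;s) at s0 >= 0 (one-sided at s0 = 0,
   since L is only considered on s >= 0) *)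
Definition has_sderiv (R : realType) (D : nat) (L : ZD D -> R -> R)
    (x : ZD D) (s0 d : R) : Prop :=
  (fun h => (L x (s0 + h) - L x s0) / h)
    @ within [set h | h != 0 /\ 0 <= s0 + h] (nbhs (0 : R)) --> d.

Definition is_local_max (R : realType) (D : nat) (L : ZD D -> R -> R)
    (x0 : ZD D) (s0 : R) : Prop :=
  forall x, norminf (x - x0) = 1%N -> L x s0 <= L x0 s0.

Definition is_local_min (R : realType) (D : nat) (L : ZD D -> R -> R)
    (x0 : ZD D) (s0 : R) : Prop :=
  forall x, norminf (x - x0) = 1%N -> L x0 s0 <= L x s0.

Definition pre_scale_space_properties (R : realType) (D : nat)
    (L : ZD D -> R -> R) : Prop :=
  forall s0 : R, 0 <= s0 -> forall x0 : ZD D,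
    (is_local_max L x0 s0 -> exists2 d, has_sderiv L x0 s0 d & d <= 0) /\
    (is_local_min L x0 s0 -> exists2 d, has_sderiv L x0 s0 d & 0 <= d).

Definition scale_space_family (R : realType) (D : nat)
    (T : ZD D -> R -> R) : Prop :=
  pre_scale_space_family T /\
  forall f : ZD D -> R, l1_summable f ->
    pre_scale_space_properties (pre_ss_rep T f).

From HB Require Import structures.
From mathcomp Require Import all_boot all_order all_algebra.
From mathcomp Require Import all_classical all_reals all_analysis.
From mathcomp Require Import zify ring lra.
Import Order.TTheory GRing.Theory Num.Theory.
Import numFieldNormedType.Exports.
Set Implicit Arguments. Unset Strict Implicit. Unset Printing Implicit Defensive.
Local Open Scope classical_set_scope.
Local Open Scope ring_scope.

(* Feeding the scale-space axioms the signal [delta] at scale [0], where every point is a weak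
   local extremum, shows that [T (z; .)] has a right derivative at [0]; it is [>= 0] for
   [z <> 0] (local minima) and vanishes for [|z| > 1] (points that are both maximum and
   minimum). A signal that is constant on the [1]-neighbourhood of [x] has zero derivative at
   [x] for the same reason, so splitting a signal into its restriction to the box [x + [-1,1]^D]
   and a remainder vanishing there yields [d/ds L(x; 0+) = sum_xi a_xi f (x + xi)] with
   [a_xi = d/ds T (- xi; 0+)]; the indicator of [[-1,1]^D] gives [sum_xi a_xi = 0]. The
   semigroup property moves this to every scale [s]. For the two-sided derivative at [s > 0],
   pick a small [r <= s] at which [T (.; r)] is peaked around [0] (possible because
   [T (.; r) --> delta] in [l1]): adding a large multiple of [delta_x] to [L (.; s - r)] makes
   [x] a local maximum at scale [r], where the axioms provide a derivative. *)

Lemma leq_abszD (a b : int) : (absz (a + b)%R <= absz a + absz b)%N.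
Proof. lia. Qed.

Section SupNorm.
Variable D : nat.
Implicit Types x y : ZD D.

Lemma norminf_leP x n :
  reflect (forall i, (absz (x ord0 i) <= n)%N) (norminf x <= n)%N.
Proof.
by apply: (iffP (bigmax_leqP _ _ _)) => H i; [apply: H | move=> _; apply: H].
Qed.

Lemma absz_le_norminf x i : (absz (x ord0 i) <= norminf x)%N.
Proof. exact: (@leq_bigmax _ (fun i => absz (x ord0 i)) i). Qed.

Lemma norminfD x y : (norminf (x + y) <= norminf x + norminf y)%N.
Proof.
apply/norminf_leP => i; rewrite mxE; apply: leq_trans (leq_abszD _ _) _.
by apply: leq_add; apply: absz_le_norminf.
Qed.

Lemma norminfN x : norminf (- x) = norminf x.
Proof.
apply/eqP; rewrite eqn_leq; apply/andP; split; apply/norminf_leP => i.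
- by rewrite mxE abszN; apply: absz_le_norminf.
- by have := absz_le_norminf (- x) i; rewrite mxE abszN.
Qed.

Lemma norminf_eq0 x : (norminf x == 0%N) = (x == 0).
Proof.
apply/idP/eqP => [/eqP x0|->]; last first.
  by rewrite -leqn0; apply/norminf_leP => i; rewrite mxE.
apply/rowP => i; rewrite mxE; apply/eqP; rewrite -absz_eq0 -leqn0.
by have := absz_le_norminf x i; rewrite x0.
Qed.

Lemma norminf0 : norminf (0 : ZD D) = 0%N.
Proof. by apply/eqP; rewrite norminf_eq0. Qed.

End SupNorm.

Definition box_pt (D n : nat) (j : 'rV['I_(2 * n + 1)]_D) : ZD D :=
  \row_i ((j ord0 i : nat)%:Z - n%:Z).

Section Box.
Variables (D n : nat).
Implicit Types (x y : ZD D) (j : 'rV['I_(2 * n + 1)]_D).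

Lemma norminf_box_pt j : (norminf (box_pt j) <= n)%N.
Proof. by apply/norminf_leP => i; rewrite mxE; have := ltn_ord (j ord0 i); lia. Qed.

Lemma box_pt_inj : injective (@box_pt D n).
Proof.
move=> j k /rowP jk; apply/rowP => i; apply: val_inj.
by have := jk i; rewrite !mxE => /addIr [].
Qed.

Lemma box_pt_onto y : (norminf y <= n)%N -> exists j, box_pt j = y.
Proof.
move/norminf_leP => yn.
have lt_y i : (absz (y ord0 i + n%:Z)%R < 2 * n + 1)%N by have := yn i; lia.
exists (\row_i Ordinal (lt_y i)); apply/rowP => i; rewrite !mxE /=.
by move: (y ord0 i) (yn i) => a; lia.
Qed.

End Box.

Section BoxSum.
Variables (R : realType) (D : nat).
Implicit Types (u v w : ZD D -> R) (x y c : ZD D).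

Lemma box_sum_indicator n y :
  box_sum n (fun z => ((z == y)%:R : R)) = (norminf y <= n)%N%:R.
Proof.
case: (boolP (norminf y <= n)%N) => yn; last first.
  rewrite /box_sum big1 // => j _; case: eqP => // jy.
  by move: yn; rewrite -jy norminf_box_pt.
have [j0 <-] := box_pt_onto yn.
rewrite /box_sum (bigD1 j0) //= eqxx big1 ?addr0 // => j /negbTE.
by rewrite (inj_eq (@box_pt_inj D n)) => ->.
Qed.

Lemma box_sum_dirac n (c : ZD D -> R) y :
  box_sum n (fun z => c z * (z == y)%:R) = c y * (norminf y <= n)%N%:R.
Proof.
rewrite -box_sum_indicator /box_sum mulr_sumr; apply: eq_bigr => j _.
by case: eqP => [->|]; rewrite ?mulr0.
Qed.

Lemma eq_box_sum n u v : u =1 v -> box_sum n u = box_sum n v.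
Proof. by move=> uv; apply: eq_bigr => j _. Qed.

Lemma ler_box_sum n u v : (forall y, u y <= v y) -> box_sum n u <= box_sum n v.
Proof. by move=> uv; apply: ler_sum => j _. Qed.

Lemma box_sum_ge0 n w : (forall y, 0 <= w y) -> 0 <= box_sum n w.
Proof. by move=> w0; apply: sumr_ge0 => j _. Qed.

Lemma box_sumD n u v : box_sum n (fun y => u y + v y) = box_sum n u + box_sum n v.
Proof. exact: big_split. Qed.

Lemma box_sumB n u v : box_sum n (fun y => u y - v y) = box_sum n u - box_sum n v.
Proof. exact: sumrB. Qed.

Lemma box_sumMl n (k : R) u : box_sum n (fun y => k * u y) = k * box_sum n u.
Proof. by rewrite /box_sum mulr_sumr. Qed.

Lemma box_sumMr n (k : R) u : box_sum n (fun y => u y * k) = box_sum n u * k.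
Proof. by rewrite /box_sum mulr_suml. Qed.

Lemma ler_norm_box_sum n u : `|box_sum n u| <= box_sum n (fun y => `|u y|).
Proof. exact: ler_norm_sum. Qed.

(* Both sides count each [u y] with multiplicity [#{k in box n | y = k + c}]. *)
Lemma box_sum_shift n m c u : (n + norminf c <= m)%N ->
  box_sum n (fun y => u (y + c)) =
  box_sum m (fun y => u y * (norminf (y - c) <= n)%N%:R).
Proof.
move=> nm; rewrite /box_sum.
transitivity (\sum_(k : 'rV['I_(2 * n + 1)]_D) \sum_(j : 'rV['I_(2 * m + 1)]_D)
    u (box_pt j) * (box_pt j == box_pt k + c)%:R).
  apply: eq_bigr => k _; have := box_sum_dirac m u (box_pt k + c).
  rewrite /box_sum => ->.
  suff -> : (norminf (box_pt k + c) <= m)%N by rewrite mulr1.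
  apply: leq_trans (norminfD _ _) (leq_trans _ nm).
  by rewrite leq_add2r norminf_box_pt.
rewrite exchange_big /=; apply: eq_bigr => j _.
rewrite -box_sum_indicator /box_sum mulr_sumr; apply: eq_bigr => k _.
have -> : (box_pt j == box_pt k + c) = (box_pt k == box_pt j - c).
  by apply/eqP/eqP => [->|->]; rewrite ?addrK ?subrK.
by [].
Qed.

Lemma box_sum_widen n m u : (n <= m)%N ->
  box_sum n u = box_sum m (fun y => u y * (norminf y <= n)%N%:R).
Proof.
move=> nm; have := @box_sum_shift n m 0 u; rewrite norminf0 addn0 => /(_ nm).
by under eq_fun do rewrite addr0; under [in RHS]eq_fun do rewrite subr0.
Qed.

Lemma box_sum_tail w k m : (k <= m)%N ->
  box_sum m (fun y => w y * (k < norminf y)%N%:R) = box_sum m w - box_sum k w.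
Proof.
move=> km; rewrite (box_sum_widen w km) -box_sumB; apply: eq_box_sum => y.
by case: leqP; rewrite ?mulr1 ?mulr0 ?subr0 ?subrr.
Qed.

Lemma box_sum_nondecreasing w : (forall y, 0 <= w y) ->
  {homo (fun n => box_sum n w) : n m / (n <= m)%N >-> n <= m}.
Proof.
move=> w0 n m nm /=; rewrite (box_sum_widen w nm); apply: ler_box_sum => y.
by case: (norminf y <= n)%N; rewrite ?mulr1 ?mulr0.
Qed.

Lemma ler_term_box_sum n w y : (forall z, 0 <= w z) -> (norminf y <= n)%N ->
  w y <= box_sum n w.
Proof.
move=> w0 yn; have := box_sum_dirac n w y; rewrite yn mulr1 => <-.
by apply: ler_box_sum => z; case: (z == y); rewrite ?mulr1 ?mulr0.
Qed.

End BoxSum.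

Section L1.
Variables (R : realType) (D : nat).
Implicit Types (u v w : ZD D -> R) (x y : ZD D).

Lemma l1_summable_bound u : l1_summable u ->
  exists M, [/\ 0 <= M, (forall n, box_sum n (fun y => `|u y|) <= M) &
                forall y, `|u y| <= M].
Proof.
case=> M uM; exists M; split => //.
- by apply: le_trans (uM 0%N); apply: box_sum_ge0.
- move=> y; apply: le_trans (uM (norminf y)).
  exact: (@ler_term_box_sum _ _ _ (fun z => `|u z|)).
Qed.

Lemma l1_summable_le u v : l1_summable u -> (forall y, `|v y| <= `|u y|) ->
  l1_summable v.
Proof. by case=> M uM vu; exists M => n; apply: le_trans (uM n); apply: ler_box_sum. Qed.

Lemma l1_summable_norm u : l1_summable u -> l1_summable (fun y => `|u y|).
Proof. by move=> u1; apply: (l1_summable_le u1) => y; rewrite normr_id. Qed.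

Lemma l1_summableD u v : l1_summable u -> l1_summable v ->
  l1_summable (fun y => u y + v y).
Proof.
case=> M uM [N vN]; exists (M + N) => n; apply: le_trans (lerD (uM n) (vN n)).
by rewrite -box_sumD; apply: ler_box_sum => y; apply: ler_normD.
Qed.

Lemma l1_summableB u v : l1_summable u -> l1_summable v ->
  l1_summable (fun y => u y - v y).
Proof.
move=> u1 v1; apply: (l1_summableD u1).
by apply: (l1_summable_le v1) => y; rewrite normrN.
Qed.

Lemma l1_summableMr u g G : l1_summable u -> (forall y, `|g y| <= G) ->
  l1_summable (fun y => u y * g y).
Proof.
case=> M uM gG; have G0 : 0 <= G by apply: le_trans (gG 0).
exists (M * G) => n.
apply: le_trans (_ : _ <= box_sum n (fun y => `|u y| * G)) _.
  by apply: ler_box_sum => y; rewrite normrM ler_wpM2l.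
by rewrite box_sumMr ler_wpM2r.
Qed.

Lemma l1_summableMl (k : R) u : l1_summable u -> l1_summable (fun y => k * u y).
Proof.
case=> M uM; exists (`|k| * M) => n.
under eq_box_sum do rewrite normrM.
by rewrite box_sumMl ler_wpM2l.
Qed.

Lemma l1_summable_dirac y : l1_summable (fun z => (z == y)%:R : R).
Proof.
exists 1 => n; under eq_box_sum do rewrite normr_nat.
by rewrite box_sum_indicator; case: (_ <= _)%N.
Qed.

Lemma l1_summable_sum (I : Type) (r : seq I) (F : I -> ZD D -> R) :
  (forall i, l1_summable (F i)) -> l1_summable (fun z => \sum_(i <- r) F i z).
Proof.
move=> F1; elim: r => [|i r IH].
  by exists 0 => n; rewrite /box_sum big1 // => j _; rewrite big_nil normr0.
by under eq_fun do rewrite big_cons; apply: l1_summableD.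
Qed.

Lemma lsum_eq_lim u l : (fun n => box_sum n u) @ \oo --> l -> lsum u = l.
Proof. exact: cvg_lim. Qed.

Lemma cvg_box_sum_ge0 w M : (forall y, 0 <= w y) -> (forall n, box_sum n w <= M) ->
  (fun n => box_sum n w) @ \oo --> lsum w.
Proof.
move=> w0 wM; apply: (nondecreasing_is_cvgn (box_sum_nondecreasing w0)).
by exists M => _ [n _ <-].
Qed.

(* Split [u] into its positive and negative parts, whose box sums are monotone. *)
Lemma cvg_box_sum u : l1_summable u -> (fun n => box_sum n u) @ \oo --> lsum u.
Proof.
case=> M uM.
pose up y := (`|u y| + u y) / 2; pose un y := (`|u y| - u y) / 2.
have uN y : - u y <= `|u y| by rewrite -normrN ler_norm.
have uP y : u y <= `|u y| by rewrite ler_norm.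
have up0 y : 0 <= up y by rewrite divr_ge0 //; have := uN y; lra.
have un0 y : 0 <= un y by rewrite divr_ge0 //; have := uP y; lra.
have upM n : box_sum n up <= M.
  by apply: le_trans (uM n); apply: ler_box_sum => y; have := uP y; rewrite /up; lra.
have unM n : box_sum n un <= M.
  by apply: le_trans (uM n); apply: ler_box_sum => y; have := uN y; rewrite /un; lra.
have uE : (fun n => box_sum n u) = (fun n => box_sum n up - box_sum n un).
  by apply: funext => n; rewrite -box_sumB; apply: eq_box_sum => y; rewrite /up /un; field.
have C : (fun n => box_sum n u) @ \oo --> lsum up - lsum un.
  by rewrite uE; exact: cvgB (cvg_box_sum_ge0 up0 upM) (cvg_box_sum_ge0 un0 unM).
by rewrite (lsum_eq_lim C).
Qed.

Lemma lsumD u v : l1_summable u -> l1_summable v ->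
  lsum (fun y => u y + v y) = lsum u + lsum v.
Proof.
move=> u1 v1; apply: lsum_eq_lim; under eq_fun do rewrite box_sumD.
exact: cvgD (cvg_box_sum u1) (cvg_box_sum v1).
Qed.

Lemma lsumMl (k : R) u : l1_summable u -> lsum (fun y => k * u y) = k * lsum u.
Proof.
move=> u1; apply: lsum_eq_lim; under eq_fun do rewrite box_sumMl.
exact: cvgMl_tmp (cvg_box_sum u1).
Qed.

Lemma lsumMr (k : R) u : l1_summable u -> lsum (fun y => u y * k) = lsum u * k.
Proof.
move=> u1; apply: lsum_eq_lim; under eq_fun do rewrite box_sumMr.
exact: cvgMr_tmp (cvg_box_sum u1).
Qed.

Lemma eq_lsum u v : u =1 v -> lsum u = lsum v.
Proof. by move=> /funext ->. Qed.

Lemma lsum_le u M : l1_summable u -> (forall n, box_sum n u <= M) -> lsum u <= M.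
Proof. by move=> u1 uM; apply: limr_le; [apply: cvg_box_sum | apply: nearW]. Qed.

Lemma box_sum_le_lsum w n : (forall y, 0 <= w y) -> l1_summable w ->
  box_sum n w <= lsum w.
Proof.
move=> w0 w1; apply: limr_ge; first exact: cvg_box_sum.
by exists n => // m /= nm; apply: box_sum_nondecreasing.
Qed.

Lemma ler_norm_lsum u : l1_summable u -> `|lsum u| <= lsum (fun y => `|u y|).
Proof.
move=> u1; have C : (fun n => `|box_sum n u|) @ \oo --> `|lsum u|.
  exact: cvg_norm (cvg_box_sum u1).
rewrite -(cvg_lim _ C) //; apply: ler_lim; first by apply/cvg_ex; exists `|lsum u|.
  exact: cvg_box_sum (l1_summable_norm u1).
by apply: nearW => n; apply: ler_norm_box_sum.
Qed.

Lemma lsum_eventually u N k : (forall n, (N <= n)%N -> box_sum n u = k) -> lsum u = k.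
Proof. by move=> uk; apply: lsum_eq_lim; apply: cvg_near_cst; exists N => // n /= /uk. Qed.

Lemma lsum_box u k : (forall y, (k < norminf y)%N -> u y = 0) -> lsum u = box_sum k u.
Proof.
move=> u0; apply: (@lsum_eventually _ k) => n kn.
rewrite (box_sum_widen u kn); apply: eq_box_sum => y.
by case: leqP => [|/u0 ->]; rewrite ?mulr1 ?mul0r.
Qed.

Lemma lsum_dirac (c : ZD D -> R) y : lsum (fun z => c z * (z == y)%:R) = c y.
Proof.
by apply: (@lsum_eventually _ (norminf y)) => n yn; rewrite box_sum_dirac yn mulr1.
Qed.

Lemma lsum_sum (I : Type) (r : seq I) (F : I -> ZD D -> R) :
  (forall i, l1_summable (F i)) ->
  lsum (fun z => \sum_(i <- r) F i z) = \sum_(i <- r) lsum (F i).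
Proof.
move=> F1; elim: r => [|i r IH].
  rewrite big_nil; under eq_fun do rewrite big_nil.
  by apply: (@lsum_eventually _ 0) => n _; rewrite /box_sum big1.
rewrite big_cons -IH -lsumD //; last exact: l1_summable_sum.
by under eq_fun do rewrite big_cons.
Qed.

End L1.

Section Shift.
Variables (R : realType) (D : nat).
Implicit Types (u : ZD D -> R) (y c : ZD D).

Lemma box_sum_shift_le u c M : (forall m, box_sum m (fun y => `|u y|) <= M) ->
  forall n, box_sum n (fun y => `|u (y + c)|) <= M.
Proof.
move=> uM n; rewrite (@box_sum_shift R D n (n + norminf c) c (fun y => `|u y|)) //.
apply: le_trans (uM (n + norminf c)%N); apply: ler_box_sum => y.
by case: (_ <= _)%N; rewrite ?mulr1 ?mulr0.
Qed.

Lemma l1_summable_shift u c : l1_summable u -> l1_summable (fun y => u (y + c)).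
Proof. by case=> M uM; exists M; apply: box_sum_shift_le. Qed.

(* The shifted box [c + [-n, n]^D] contains the box of radius [n - |c|]. *)
Lemma box_sum_shift_error u c n m : (norminf c <= n)%N -> (n + norminf c <= m)%N ->
  `|box_sum n (fun y => u (y + c)) - box_sum m u| <=
    box_sum m (fun y => `|u y|) - box_sum (n - norminf c) (fun y => `|u y|).
Proof.
move=> cn nm; rewrite (box_sum_shift u nm) -box_sumB.
rewrite -box_sum_tail; last by lia.
apply: le_trans (ler_norm_box_sum _ _) _; apply: ler_box_sum => y.
case: (boolP (norminf (y - c) <= n)%N) => ycn.
  by rewrite mulr1 subrr normr0 mulr_ge0.
suff -> : (n - norminf c < norminf y)%N by rewrite mulr0 sub0r normrN mulr1.
have := norminfD y (- c); rewrite norminfN; move: ycn; rewrite -ltnNge; lia.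
Qed.

Lemma lsum_shift u c : l1_summable u -> lsum (fun y => u (y + c)) = lsum u.
Proof.
move=> u1; apply: lsum_eq_lim; set k := norminf c.
have w1 := l1_summable_norm u1.
have err n : (k <= n)%N -> `|lsum u - box_sum n (fun y => u (y + c))| <=
    lsum (fun y => `|u y|) - box_sum (n - k) (fun y => `|u y|).
  move=> kn; rewrite distrC.
  apply: (cvgr_to_le (F := \oo)
    (f := fun m => `|box_sum n (fun y => u (y + c)) - box_sum m u|)).
    exact: cvg_norm (cvgB (cvg_cst _) (cvg_box_sum u1)).
  exists (n + k)%N => // m /= nkm; apply: le_trans (box_sum_shift_error _ kn nkm) _.
  by rewrite lerD2r box_sum_le_lsum.
apply/cvgrPdist_le => e e0.
have /cvgrPdist_le /(_ e e0) [N _ NP] := cvg_box_sum w1.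
exists (N + k)%N => // n /= Nn; apply: le_trans (err n _) _; first lia.
by apply: le_trans (ler_norm _) (NP _ _) => /=; lia.
Qed.

End Shift.

Section Fubini.
Variables (R : realType) (D : nat) (F : ZD D -> ZD D -> R) (M : R).
Hypothesis FM : forall n, box_sum n (fun x => box_sum n (fun y => `|F x y|)) <= M.

Let Q n := box_sum n (fun x => box_sum n (fun y => `|F x y|)).

Lemma l1_summable_row x : l1_summable (F x).
Proof.
exists M => k; set K := maxn k (norminf x).
apply: le_trans (_ : _ <= box_sum K (fun y => `|F x y|)) (le_trans _ (FM K)).
  by apply: box_sum_nondecreasing; rewrite ?leq_maxl.
by apply: (@ler_term_box_sum _ _ _ (fun x => box_sum K (fun y => `|F x y|))) => [z|];
  rewrite ?box_sum_ge0 ?leq_maxr.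
Qed.

Let Q_nondecreasing : {homo Q : n m / (n <= m)%N >-> n <= m}.
Proof.
move=> n m nm; apply: (@le_trans _ _ (box_sum n (fun x => box_sum m (fun y => `|F x y|)))).
  by apply: ler_box_sum => x; apply: box_sum_nondecreasing.
by apply: (box_sum_nondecreasing (w := fun x => box_sum m (fun y => `|F x y|))) => // x;
  apply: box_sum_ge0.
Qed.

Let Qlim := limn Q.

Let cvg_Q : Q @ \oo --> Qlim.
Proof.
by apply: (nondecreasing_is_cvgn Q_nondecreasing); exists M => _ [k _ <-]; apply: FM.
Qed.

Let Q_le_Qlim n : Q n <= Qlim.
Proof. by apply: (nondecreasing_cvgn_le Q_nondecreasing); apply/cvg_ex; exists Qlim. Qed.

Let row_error n :
  box_sum n (fun x => `|lsum (F x) - box_sum n (F x)|) <= Qlim - Q n.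
Proof.
apply: (cvgr_to_le (F := \oo)
  (f := fun k => box_sum n (fun x => `|box_sum k (F x) - box_sum n (F x)|))).
  apply: (@cvg_big _ _ +%R 0 xpredT add_continuous) => // j _; apply: cvg_norm.
  exact: cvgB (cvg_box_sum (l1_summable_row _)) (cvg_cst _).
exists n => // k /= nk.
have tail x : `|box_sum k (F x) - box_sum n (F x)| <=
    box_sum k (fun y => `|F x y|) - box_sum n (fun y => `|F x y|).
  rewrite -!box_sum_tail //; apply: le_trans (ler_norm_box_sum _ _) _.
  by apply: ler_box_sum => y; rewrite normrM normr_nat.
apply: le_trans (ler_box_sum _ tail) _; rewrite box_sumB lerD2r.
apply: le_trans (Q_le_Qlim k).
apply: (box_sum_nondecreasing (w := fun x => box_sum k (fun y => `|F x y|))) => // x.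
exact: box_sum_ge0.
Qed.

Lemma l1_summable_row_lsum : l1_summable (fun x => lsum (F x)).
Proof.
exists Qlim => n; rewrite -(subrK (Q n) Qlim).
apply: le_trans (lerD (row_error n) (lexx (Q n))); rewrite /Q -box_sumD.
apply: ler_box_sum => x; rewrite -[X in `|X|](subrK (box_sum n (F x))).
by apply: le_trans (ler_normD _ _) _; rewrite lerD2l ler_norm_box_sum.
Qed.

Lemma cvg_double_box_sum :
  (fun n => box_sum n (fun x => box_sum n (F x))) @ \oo --> lsum (fun x => lsum (F x)).
Proof.
set I := fun x => lsum (F x).
have err : (fun n => box_sum n I - box_sum n (fun x => box_sum n (F x))) @ \oo --> 0.
  apply/cvgr0Pnorm_le => e e0.
  have /cvgrPdist_le /(_ e e0) [N _ NP] := cvg_Q.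
  exists N => // n /= Nn; rewrite -box_sumB; apply: le_trans (ler_norm_box_sum _ _) _.
  by apply: le_trans (row_error n) _; apply: le_trans (ler_norm _) (NP _ Nn).
have -> : (fun n => box_sum n (fun x => box_sum n (F x))) =
    (fun n => box_sum n I - (box_sum n I - box_sum n (fun x => box_sum n (F x)))).
  by apply: funext => n; rewrite subKr.
rewrite -[lsum I]subr0; exact: cvgB (cvg_box_sum l1_summable_row_lsum) err.
Qed.

End Fubini.

Lemma lsum_exchange (R : realType) (D : nat) (F : ZD D -> ZD D -> R) M :
  (forall n, box_sum n (fun x => box_sum n (fun y => `|F x y|)) <= M) ->
  lsum (fun x => lsum (F x)) = lsum (fun y => lsum (fun x => F x y)).
Proof.
move=> FM; have FM' n : box_sum n (fun y => box_sum n (fun x => `|F x y|)) <= M.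
  by rewrite /box_sum exchange_big; apply: FM.
have := cvg_double_box_sum FM'.
have -> : (fun n => box_sum n (fun y => box_sum n (fun x => F x y))) =
    (fun n => box_sum n (fun x => box_sum n (F x))).
  by apply: funext => n; rewrite /box_sum exchange_big.
by move/(cvg_lim _) <- => //; rewrite (cvg_lim _ (cvg_double_box_sum FM)).
Qed.

Lemma box_sum_convolution_bound (R : realType) (D : nat) (u v g : ZD D -> R) :
  l1_summable u -> l1_summable v -> (exists G, forall y, `|g y| <= G) ->
  exists M, forall n,
    box_sum n (fun x => box_sum n (fun y => `|u y * v (x - y) * g x|)) <= M.
Proof.
move=> /l1_summable_bound [Mu [Mu0 uM _]] /l1_summable_bound [Mv [Mv0 vM _]] [G gG].
have G0 : 0 <= G by apply: le_trans (gG 0).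
exists (Mu * (Mv * G)) => n; rewrite /box_sum exchange_big /=.
apply: le_trans (_ : _ <= \sum_(j : 'rV['I_(2 * n + 1)]_D) `|u (box_pt j)| * (Mv * G)) _.
  apply: ler_sum => j _.
  apply: le_trans
    (_ : _ <= box_sum n (fun x => `|u (box_pt j)| * (`|v (x - box_pt j)| * G))) _.
    by apply: ler_sum => i _; rewrite !normrM mulrA ler_wpM2l ?mulr_ge0.
  rewrite box_sumMl ler_wpM2l // box_sumMr ler_wpM2r //.
  exact: box_sum_shift_le vM n.
by rewrite -mulr_suml ler_wpM2r ?mulr_ge0 //; apply: uM.
Qed.

Section Representation.
Variables (R : realType) (D : nat) (T : ZD D -> R -> R).
Hypothesis T_pre : pre_scale_space_family T.
Implicit Types (f g : ZD D -> R) (x y : ZD D).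

Notation L f := (pre_ss_rep T f).

Lemma l1_summable_kernel s : 0 <= s -> l1_summable (fun x => T x s).
Proof. by case: T_pre => + _ _ _; apply. Qed.

Lemma kernel0 x : T x 0 = (x == 0)%:R.
Proof. by case: T_pre => _ -> _ _. Qed.

Lemma kernel_semigroup s1 s2 x : 0 <= s1 -> 0 <= s2 ->
  lsum (fun y => T y s1 * T (x - y) s2) = T x (s1 + s2).
Proof. by case: T_pre => _ _ + _; apply. Qed.

Lemma l1_summable_rep_term f x s : l1_summable f -> 0 <= s ->
  l1_summable (fun y => T y s * f (x - y)).
Proof.
move=> /l1_summable_bound [G [_ _ fG]] s0.
exact: l1_summableMr (l1_summable_kernel s0) (fun y => fG (x - y)).
Qed.

Lemma pre_ss_repD f g x s : l1_summable f -> l1_summable g -> 0 <= s ->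
  L (fun y => f y + g y) x s = L f x s + L g x s.
Proof.
move=> f1 g1 s0; rewrite /pre_ss_rep -lsumD; try exact: l1_summable_rep_term.
by apply: eq_lsum => y; rewrite mulrDr.
Qed.

Lemma pre_ss_repMl (k : R) f x s : l1_summable f -> 0 <= s ->
  L (fun y => k * f y) x s = k * L f x s.
Proof.
move=> f1 s0; rewrite /pre_ss_rep -lsumMl; last exact: l1_summable_rep_term.
by apply: eq_lsum => y; rewrite mulrCA.
Qed.

Lemma pre_ss_rep_sum (I : Type) (r : seq I) (F : I -> ZD D -> R) x s :
  (forall i, l1_summable (F i)) -> 0 <= s ->
  L (fun y => \sum_(i <- r) F i y) x s = \sum_(i <- r) L (F i) x s.
Proof.
move=> F1 s0; rewrite /pre_ss_rep -lsum_sum => [|i]; last exact: l1_summable_rep_term.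
by apply: eq_lsum => y; rewrite mulr_sumr.
Qed.

Lemma pre_ss_rep_at0 f x : L f x 0 = f x.
Proof.
rewrite /pre_ss_rep (eq_lsum (v := fun y => f (x - y) * (y == 0)%:R)).
  by rewrite lsum_dirac subr0.
by move=> y; rewrite kernel0 mulrC.
Qed.

Lemma pre_ss_rep_dirac p x s : L (fun y => (y == p)%:R) x s = T (x - p) s.
Proof.
rewrite /pre_ss_rep (eq_lsum (v := fun y => T y s * (y == x - p)%:R)).
  by rewrite lsum_dirac.
by move=> y; rewrite (can2_eq (subKr x) (subKr x)).
Qed.

Lemma pre_ss_rep_bounded f s : l1_summable f -> 0 <= s ->
  exists K, forall x, `|L f x s| <= K.
Proof.
move=> f1 s0; have [G [G0 _ fG]] := l1_summable_bound f1.
have [MT [MT0 TM _]] := l1_summable_bound (l1_summable_kernel s0).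
exists (MT * G) => x; have term1 := l1_summable_rep_term x f1 s0.
apply: le_trans (ler_norm_lsum term1) _.
apply: lsum_le => [|n]; first exact: l1_summable_norm.
apply: le_trans (_ : _ <= box_sum n (fun y => `|T y s| * G)) _.
  by apply: ler_box_sum => y; rewrite normrM ler_wpM2l.
by rewrite box_sumMr ler_wpM2r.
Qed.

Lemma l1_summable_pre_ss_rep f s : l1_summable f -> 0 <= s ->
  l1_summable (fun x => L f x s).
Proof.
move=> f1 s0; have [G [G0 fM _]] := l1_summable_bound f1.
have [MT [MT0 TM _]] := l1_summable_bound (l1_summable_kernel s0).
exists (MT * G) => n.
apply: le_trans (_ : _ <= box_sum n (fun x => lsum (fun y => `|T y s * f (x - y)|))) _.
  by apply: ler_box_sum => x; apply: ler_norm_lsum; apply: l1_summable_rep_term.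
rewrite /box_sum -lsum_sum; last by move=> j; apply/l1_summable_norm/l1_summable_rep_term.
set fn := fun y => box_sum n (fun x => `|f (x - y)|).
have fnG y : `|fn y| <= G by rewrite ger0_norm ?box_sum_ge0 //; apply: box_sum_shift_le.
rewrite (eq_lsum (v := fun y => `|T y s| * fn y)); last first.
  by move=> y; rewrite /fn /box_sum mulr_sumr; apply: eq_bigr => j _; rewrite normrM.
apply: lsum_le => [|m].
  exact: l1_summableMr (l1_summable_norm (l1_summable_kernel s0)) fnG.
apply: le_trans (_ : _ <= box_sum m (fun y => `|T y s| * G)) _.
  by apply: ler_box_sum => y; rewrite ler_wpM2l //; apply: le_trans (ler_norm _) (fnG y).
by rewrite box_sumMr ler_wpM2r //; apply: TM.
Qed.

Lemma pre_ss_rep_semigroup f x s t : l1_summable f -> 0 <= s -> 0 <= t ->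
  L f x (t + s) = L (fun y => L f y s) x t.
Proof.
move=> f1 s0 t0.
have [Gf [_ _ fG]] := l1_summable_bound f1.
have [Gs [_ _ TsG]] := l1_summable_bound (l1_summable_kernel s0).
pose F y z := T z t * T (y - z) s * f (x - y).
have [M FM] : exists M, forall n, box_sum n (fun y => box_sum n (fun z => `|F y z|)) <= M.
  apply: (box_sum_convolution_bound (l1_summable_kernel t0) (l1_summable_kernel s0)
    (g := fun y => f (x - y))).
  by exists Gf => y; apply: fG.
transitivity (lsum (fun y => lsum (F y))).
  apply: eq_lsum => y; rewrite /F -(kernel_semigroup y t0 s0) -lsumMr //.
  exact: l1_summableMr (l1_summable_kernel t0) (fun z => TsG (y - z)).
rewrite (lsum_exchange FM); apply: eq_lsum => z.
have term1 := l1_summable_rep_term (x - z) f1 s0.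
rewrite /pre_ss_rep -(lsum_shift (- z) term1).
rewrite -lsumMl; last exact: (l1_summable_shift (- z) term1).
apply: eq_lsum => y; rewrite /F mulrA; congr (_ * f _).
by rewrite opprB addrA subrK.
Qed.

End Representation.

Section OneSided.
Variable R : realType.

Lemma cvg_within_transfer (f g : R -> R) (A B : set R) (a d : R) :
  (\forall h \near a, A h -> B h /\ f h = g h) ->
  g @ within B (nbhs a) --> d -> f @ within A (nbhs a) --> d.
Proof.
move=> ABfg gd P /gd; rewrite /within /=; apply: filterS2 ABfg => h ABh Ph Ah.
by have [Bh fg] := ABh Ah; rewrite /preimage /= fg; apply: Ph.
Qed.

Lemma cvg_at_right_unique (q : R -> R) (d1 d2 : R) :
  q @ 0^'+ --> d1 -> q @ 0^'+ --> d2 -> d1 = d2.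
Proof. by move=> q1 q2; rewrite -(cvg_lim _ q1) // -(cvg_lim _ q2). Qed.

Lemma has_sderiv_right D (L : ZD D -> R -> R) x s d : 0 <= s ->
  has_sderiv L x s d -> (fun h => (L x (s + h) - L x s) / h) @ 0^'+ --> d.
Proof.
move=> s0; apply: cvg_trans; apply: cvg_app; apply: within_subset => h /= h0.
by rewrite gt_eqF // addr_ge0 // ltW.
Qed.

End OneSided.

Section LocalPart.
Variables (R : realType) (D : nat).
Implicit Types (g : ZD D -> R) (x y : ZD D).

Definition local_part g x y := box_sum 1 (fun xi => g (x + xi) * (y == x + xi)%:R).

Lemma local_partE g x y : (norminf (y - x) <= 1)%N -> local_part g x y = g y.
Proof.
move=> yx; rewrite /local_part.
under eq_box_sum do rewrite eq_sym (can2_eq (addKr x) (addNKr x)) [- x + y]addrC.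
by rewrite box_sum_dirac yx mulr1 addrCA subrr addr0.
Qed.

Lemma l1_summable_local_part g x : l1_summable (local_part g x).
Proof.
rewrite /local_part /box_sum; apply: l1_summable_sum => j.
exact/l1_summableMl/l1_summable_dirac.
Qed.

End LocalPart.

Section ScaleSpace.
Variables (R : realType) (D : nat) (T : ZD D -> R -> R).
Hypothesis T_ss : scale_space_family T.
Implicit Types (f g : ZD D -> R) (x y z : ZD D).

Notation L f := (pre_ss_rep T f).

Let T_pre : pre_scale_space_family T := T_ss.1.

Lemma sderiv_at_local_max g x s : l1_summable g -> 0 <= s -> is_local_max (L g) x s ->
  exists2 d, has_sderiv (L g) x s d & d <= 0.
Proof. by move=> g1 s0; have [+ _] := T_ss.2 g g1 s s0 x. Qed.

Lemma sderiv_at_local_min g x s : l1_summable g -> 0 <= s -> is_local_min (L g) x s ->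
  exists2 d, has_sderiv (L g) x s d & 0 <= d.
Proof. by move=> g1 s0; have [_ +] := T_ss.2 g g1 s s0 x. Qed.

Let right_quot0E g x :
  (fun h => (L g x (0 + h) - L g x 0) / h) = (fun h => (L g x h - g x) / h).
Proof. by apply: funext => h; rewrite add0r pre_ss_rep_at0. Qed.

Lemma right_deriv0_max g x : l1_summable g ->
  (forall y, norminf (y - x) = 1%N -> g y <= g x) ->
  exists2 d, (fun h => (L g x h - g x) / h) @ 0^'+ --> d & d <= 0.
Proof.
move=> g1 gx.
have [|d /has_sderiv_right gd d0] := sderiv_at_local_max (x := x) g1 (lexx 0).
  by move=> y /gx; rewrite !pre_ss_rep_at0.
by exists d => //; rewrite -right_quot0E; apply: gd.
Qed.

Lemma right_deriv0_min g x : l1_summable g ->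
  (forall y, norminf (y - x) = 1%N -> g x <= g y) ->
  exists2 d, (fun h => (L g x h - g x) / h) @ 0^'+ --> d & 0 <= d.
Proof.
move=> g1 gx.
have [|d /has_sderiv_right gd d0] := sderiv_at_local_min (x := x) g1 (lexx 0).
  by move=> y /gx; rewrite !pre_ss_rep_at0.
by exists d => //; rewrite -right_quot0E; apply: gd.
Qed.

Lemma right_deriv0_flat g x : l1_summable g ->
  (forall y, norminf (y - x) = 1%N -> g y = g x) ->
  (fun h => (L g x h - g x) / h) @ 0^'+ --> 0.
Proof.
move=> g1 gx.
have gx_le y : norminf (y - x) = 1%N -> g y <= g x by move=> /gx ->.
have gx_ge y : norminf (y - x) = 1%N -> g x <= g y by move=> /gx ->.
have [d1 q1 d1_le0] := right_deriv0_max g1 gx_le.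
have [d2 q2 d2_ge0] := right_deriv0_min g1 gx_ge.
suff d1_0 : d1 = 0 by rewrite d1_0 in q1.
by apply/eqP; rewrite eq_le d1_le0 (cvg_at_right_unique q1 q2) d2_ge0.
Qed.

Definition kernel_rate z := lim ((fun h => (T z h - T z 0) / h) @ 0^'+).

Let dirac0_quot z :
  (fun h => (L (fun y => (y == 0)%:R) z h - (z == 0)%:R) / h) =
  (fun h => (T z h - T z 0) / h).
Proof. by apply: funext => h; rewrite pre_ss_rep_dirac subr0 kernel0. Qed.

Let dirac0_l1 : l1_summable (fun y : ZD D => (y == 0)%:R : R) := l1_summable_dirac R 0.

Lemma cvg_kernel_rate z : (fun h => (T z h - T z 0) / h) @ 0^'+ --> kernel_rate z.
Proof.
suff [d qd] : exists d : R, (fun h => (T z h - T z 0) / h) @ 0^'+ --> d.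
  by rewrite /kernel_rate (cvg_lim _ qd) //.
case: (eqVneq z 0) => [->|z0]; rewrite -dirac0_quot.
  have [|d qd _] := right_deriv0_max (x := 0) dirac0_l1; last by exists d.
  by move=> y _; rewrite eqxx; case: (y == 0); rewrite ?lexx ?ler01.
have [|d qd _] := right_deriv0_min (x := z) dirac0_l1; last by exists d.
by move=> y _; rewrite (negbTE z0) ler0n.
Qed.

Lemma kernel_rate_ge0 z : z != 0 -> 0 <= kernel_rate z.
Proof.
move=> z0; have [|d qd d0] := right_deriv0_min (x := z) dirac0_l1.
  by move=> y _; rewrite (negbTE z0) ler0n.
by rewrite dirac0_quot in qd; rewrite (cvg_at_right_unique (@cvg_kernel_rate z) qd).
Qed.

Lemma kernel_rate_eq0 z : (1 < norminf z)%N -> kernel_rate z = 0.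
Proof.
move=> z1; have z0 : z != 0 by rewrite -norminf_eq0 -lt0n (ltn_trans _ z1).
have flat y : norminf (y - z) = 1%N -> ((y == 0)%:R : R) = (z == 0)%:R.
  rewrite (negbTE z0); case: eqP => // ->.
  by rewrite sub0r norminfN => z1'; move: z1; rewrite z1'.
have := right_deriv0_flat dirac0_l1 flat; rewrite dirac0_quot.
exact: cvg_at_right_unique (@cvg_kernel_rate z).
Qed.

(* [L f x s = lsum (fun xi => T (- xi) s * f (x + xi))], so [a_xi] is the rate
   of [T (- xi)]. *)
Definition generator xi := kernel_rate (- xi).

Lemma generator_ge0 xi : xi != 0 -> 0 <= generator xi.
Proof. by move=> xi0; apply: kernel_rate_ge0; rewrite oppr_eq0. Qed.

Lemma generator_eq0 xi : (1 < norminf xi)%N -> generator xi = 0.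
Proof. by move=> xi1; apply: kernel_rate_eq0; rewrite norminfN. Qed.

Lemma pre_ss_rep_local_part g x h : l1_summable g -> 0 <= h ->
  L (local_part g x) x h = box_sum 1 (fun xi => g (x + xi) * T (- xi) h).
Proof.
move=> g1 h0; rewrite /local_part /box_sum pre_ss_rep_sum // => [|j]; last first.
  exact/l1_summableMl/l1_summable_dirac.
apply: eq_bigr => j _; rewrite pre_ss_repMl ?pre_ss_rep_dirac //; last first.
  exact: l1_summable_dirac.
by rewrite opprD addrA subrr add0r.
Qed.

Lemma right_deriv0_local_part g x : l1_summable g ->
  (fun h => (L (local_part g x) x h - local_part g x x) / h) @ 0^'+ -->
    box_sum 1 (fun xi => generator xi * g (x + xi)).
Proof.
move=> g1; apply: (cvg_within_transfer (A := fun h => 0 < h) (B := fun h => 0 < h)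
  (g := fun h => box_sum 1 (fun xi => g (x + xi) * ((T (- xi) h - T (- xi) 0) / h)))).
  exists 1 => [|h _ /= h0]; first exact: ltr01.
  split => //.
  rewrite -(pre_ss_rep_at0 T_pre (local_part g x)) !pre_ss_rep_local_part // ?ltW //.
  rewrite -box_sumB -box_sumMr; apply: eq_box_sum => xi.
  by rewrite -mulrBr mulrA.
apply: (@cvg_big _ _ +%R 0 xpredT add_continuous) => // j _.
by rewrite mulrC; apply: cvgMl_tmp; apply: cvg_kernel_rate.
Qed.

Lemma right_deriv0_rep g x : l1_summable g ->
  (fun h => (L g x h - g x) / h) @ 0^'+ -->
    box_sum 1 (fun xi => generator xi * g (x + xi)).
Proof.
move=> g1; set gl := local_part g x; set gr := fun y => g y - gl y.
have gl1 : l1_summable gl by apply: l1_summable_local_part.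
have gr1 : l1_summable gr by apply: l1_summableB.
have gr_flat : (fun h => (L gr x h - gr x) / h) @ 0^'+ --> 0.
  apply: right_deriv0_flat => // y yx.
  by rewrite /gr /gl !local_partE ?subrr ?norminf0 ?yx.
rewrite -[X in _ --> X]addr0.
apply: (cvg_within_transfer (A := fun h => 0 < h) (B := fun h => 0 < h)
  (g := fun h => (L gl x h - gl x) / h + (L gr x h - gr x) / h));
  last exact: cvgD (right_deriv0_local_part g1) gr_flat.
exists 1 => [|h _ /= h0]; first exact: ltr01.
split => //; rewrite -mulrDl; congr (_ / h).
have -> : g = (fun y => gl y + gr y) by apply: funext => y; rewrite /gr addrC subrK.
by rewrite pre_ss_repD ?ltW // opprD addrACA.
Qed.

Lemma generator_sum0 : box_sum 1 generator = 0.
Proof.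
pose g := local_part (fun=> 1 : R) (0 : ZD D).
have g1 : l1_summable g by apply: l1_summable_local_part.
have g_box y : (norminf y <= 1)%N -> g y = 1.
  by move=> y1; rewrite /g local_partE ?subr0.
have flat : (fun h => (L g 0 h - g 0) / h) @ 0^'+ --> 0.
  by apply: right_deriv0_flat => // y; rewrite subr0 => y1; rewrite !g_box ?y1 ?norminf0.
rewrite -(cvg_at_right_unique (right_deriv0_rep (x := 0) g1) flat).
rewrite /box_sum; apply: eq_bigr => j _.
by rewrite add0r g_box ?norminf_box_pt ?mulr1.
Qed.

Definition peaked s := forall z, z != 0 -> T z s + 1 / 2 <= T 0 s.

(* [T (. ; s) --> delta] in l1 as [s --> 0+], so [T (. ; s)] is pointwise close to [delta]. *)
Lemma peaked_near0 : exists2 e, 0 < e & forall s, 0 <= s -> s < e -> peaked s.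
Proof.
have [_ _ _ T_delta] := T_pre.
have q0 : (0 : R) < 1 / 4 by rewrite divr_gt0 // ltr0n.
move/cvgrPdist_le: T_delta => /(_ _ q0) [e /= e0 Te].
exists e => // s s0 se z z0; case: (eqVneq s 0) => [->|s_neq0].
  by rewrite !(kernel0 T_pre) eqxx (negbTE z0) /=; lra.
have s_gt0 : 0 < s by rewrite lt_def s_neq0.
have : `|lsum (fun y => `|T y s - ddelta R y|)| <= 1 / 4.
  rewrite -normrN -sub0r; apply: (Te s _ s_gt0).
  by rewrite /ball /= sub0r normrN gtr0_norm.
have w1 : l1_summable (fun y => `|T y s - ddelta R y|).
  exact/l1_summable_norm/l1_summableB/l1_summable_dirac/l1_summable_kernel.
move=> /(le_trans _) close.
have {}close y : `|T y s - ddelta R y| <= 1 / 4.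
  apply: close; apply: le_trans (ler_norm _).
  apply: le_trans (box_sum_le_lsum (norminf y) _ w1) => //.
  exact: (@ler_term_box_sum R D (norminf y) (fun y => `|T y s - ddelta R y|)).
have Tz : T z s <= 1 / 4.
  by apply: le_trans (ler_norm _) _; have := close z; rewrite /ddelta (negbTE z0) subr0.
have T0 : 1 - T 0 s <= 1 / 4.
  by apply: le_trans (ler_norm _) _; rewrite distrC; have := close 0; rewrite /ddelta eqxx.
lra.
Qed.

(* [L g = L (g + M * delta_x) - M * L delta_x], and for [M] large [x] is a local
   maximum of both terms at the peaked scale [s]. *)
Lemma has_sderiv_at_peaked g x s : l1_summable g -> 0 <= s -> peaked s ->
  exists d, has_sderiv (L g) x s d.
Proof.
move=> g1 s0 Ts; have [K LK] := pre_ss_rep_bounded T_pre g1 s0.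
have K0 : 0 <= K by apply: le_trans (LK x).
pose M := 4 * K; pose dx y : R := (y == x)%:R.
have dx1 : l1_summable dx by apply: l1_summable_dirac.
pose F y := g y + M * dx y.
have F1 : l1_summable F by apply/l1_summableD/l1_summableMl.
have LF y t : 0 <= t -> L F y t = L g y t + M * T (y - x) t.
  move=> t0; rewrite pre_ss_repD ?pre_ss_repMl ?pre_ss_rep_dirac //.
  exact: l1_summableMl.
have [dF dFP _] : exists2 d, has_sderiv (L F) x s d & d <= 0.
  apply: sderiv_at_local_max => // y yx; rewrite !LF // subrr.
  have yx0 : y - x != 0 by rewrite -norminf_eq0 yx.
  have := ler_wpM2l (mulr_ge0 (ler0n _ 4) K0) (Ts _ yx0); rewrite mulrDr.
  have := ler_norm (L g y s); have := ler_norm (- L g x s); rewrite normrN.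
  by move: (LK x) (LK y); rewrite /M; lra.
have [dd ddP _] : exists2 d, has_sderiv (L dx) x s d & d <= 0.
  apply: sderiv_at_local_max => // y yx; rewrite !pre_ss_rep_dirac subrr.
  by have := Ts (y - x); rewrite -norminf_eq0 yx => /(_ isT); lra.
exists (dF - M * dd).
apply: (cvg_within_transfer (g := fun h =>
  (L F x (s + h) - L F x s) / h - M * ((L dx x (s + h) - L dx x s) / h)));
  last exact: cvgB dFP (cvgMl_tmp ddP).
exists 1 => [|h _ /= [h0 sh]]; first exact: ltr01.
by split => //; rewrite !LF // !pre_ss_rep_dirac; field.
Qed.

Lemma peaked_below s : 0 <= s -> exists r, [/\ 0 <= r, r <= s, r = s \/ 0 < r & peaked r].
Proof.
move=> s0; have [e e0 Te] := peaked_near0.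
case: (ltP s e) => [se|es]; first by exists s; split => //; [left | apply: Te].
have e2_gt0 : 0 < e / 2 by rewrite divr_gt0.
exists (e / 2); split; [exact: ltW | | by right | apply: Te; rewrite ?ltW //].
  by apply: le_trans es; rewrite ler_pdivrMr // ler_peMr ?ler1n ?ltW.
by rewrite ltr_pdivrMr // ltr_pMr // ltr1n.
Qed.

Lemma has_sderiv_pre_ss_rep f x s : l1_summable f -> 0 <= s ->
  exists d, has_sderiv (L f) x s d.
Proof.
move=> f1 s0; have [r [r0 rs r_pos Tr]] := peaked_below s0.
have sr0 : 0 <= s - r by rewrite subr_ge0.
have g1 := l1_summable_pre_ss_rep T_pre f1 sr0.
have [d gd] := has_sderiv_at_peaked x g1 r0 Tr.
have shift t : 0 <= t -> L (fun y => L f y (s - r)) x t = L f x (t + (s - r)).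
  by move=> t0; rewrite pre_ss_rep_semigroup.
exists d; apply: cvg_within_transfer gd.
have [e' e'0 e'P] : exists2 e', 0 < e' & forall h, `|h| < e' -> 0 <= s + h -> 0 <= r + h.
  case: r_pos => [->|r_gt0]; first by exists 1 => //; exact: ltr01.
  by exists r => // h hr _; have := ler_norm (- h); rewrite normrN; lra.
exists e' => // h /= hr [h0 sh]; rewrite sub0r normrN in hr; have rh := e'P h hr sh.
split => //=; rewrite !shift //.
by rewrite addrAC [r + (s - r)]addrC subrK.
Qed.

Lemma has_sderiv_generator f x s : l1_summable f -> 0 <= s ->
  has_sderiv (L f) x s (box_sum 1 (fun xi => generator xi * L f (x + xi) s)).
Proof.
move=> f1 s0; have [d fd] := has_sderiv_pre_ss_rep x f1 s0.
suff -> : box_sum 1 (fun xi => generator xi * L f (x + xi) s) = d by [].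
have g1 := l1_summable_pre_ss_rep T_pre f1 s0.
apply: (cvg_at_right_unique (right_deriv0_rep (x := x) g1)).
apply: (cvg_within_transfer (A := fun h => 0 < h) (B := fun h => 0 < h)
  (g := fun h => (L f x (s + h) - L f x s) / h)); last exact: has_sderiv_right s0 fd.
exists 1 => [|h _ /= h0]; first exact: ltr01.
by split => //=; rewrite [s + h]addrC (pre_ss_rep_semigroup T_pre _ f1 s0 (ltW h0)).
Qed.

End ScaleSpace.

Unset Implicit Arguments. Set Strict Implicit.
Local Close Scope classical_set_scope.

Theorem theoremA7 (R : realType) (D : nat) (hD : (0 < D)%N)
    (T : ZD D -> R -> R) (f : ZD D -> R) :
  scale_space_family T -> l1_summable f ->
  let L := pre_ss_rep T f in
  exists a : ZD D -> R,
    [/\ (forall xi, (1 < norminf xi)%N -> a xi = 0),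
        (forall xi, xi != 0 -> 0 <= a xi),
        lsum a = 0,
        (forall x, L x 0 = f x) &
        (forall x s, 0 <= s ->
           has_sderiv L x s (lsum (fun xi => a xi * L (x + xi) s)))].
Proof.
move=> T_ss f1 L; have a_local := generator_eq0 T_ss.
exists (generator T); split.
- exact: a_local.
- exact: generator_ge0.
- by rewrite (lsum_box (k := 1)) ?generator_sum0.
- exact: pre_ss_rep_at0 T_ss.1 f.
- move=> x s s0; rewrite (lsum_box (k := 1)) => [|xi /a_local ->]; last by rewrite mul0r.
  exact: has_sderiv_generator.
Qed.
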